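(* For every positive integer $t$ there exists an integer $L_t$ such that the following holds. Let $G$ be a finite group (not necessarily abelian, written additively) such that the smallest prime divisor $p$ of $|G|$ satisfies $p>t(2t+1)$. Let $M=[a_1^{\lambda_1},\dots,a_n^{\lambda_n}]$ be a multiset of non-identity elements of $G$ (with $a_1,\dots,a_n$ distinct) such that $\lambda_1+\lambda_2+\dots+\lambda_n\ge L_t$. Then there exists a realization $W=(w_0,\dots,w_{\lambda_1+\dots+\lambda_n})$ of $M$ such that $w_i\ne w_j$ whenever $1\le|i-j|\le t$.
   Context: $[a_1^{\lambda_1},\dots,a_n^{\lambda_n}]$ denotes the multiset containing $a_i$ with multiplicity $\lambda_i$. For a multiset $M$, $\pm M$ denotes the multiset $[x,-x : x\in M]$ (with multiplicity). A walk $W=(w_0,\dots,w_\ell)$ in $G$ has differences $\delta_i$ defined by $w_i=w_{i-1}+\delta_i$ ($1\le i\le \ell$), and $\Delta(W)=\pm[\delta_1,\dots,\delta_\ell]$. A realization of $M$ is a walk $W$ (in the Cayley graph $Cay[G:\pm M]$, vertices may repeat) with $\Delta(W)=\pm M$; equivalently, there is an ordering $(x_1,\dots,x_\ell)$ of $M$ and signs $\varepsilon_i\in\{\pm1\}$ with $w_i=w_{i-1}+\varepsilon_i x_i$. *)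

From mathcomp Require Import all_boot all_fingroup.
Set Implicit Arguments. Unset Strict Implicit. Unset Printing Implicit Defensive.
Local Open Scope group_scope.

(* One step of a walk: difference x with sign (true = +1, false = -1).
   The paper's additive  w_i = w_{i-1} + eps_i x_i  is rendered
   multiplicatively as  w_i = w_{i-1} * x_i^{eps_i}. *)
Definition signed_step (gT : finGroupType) (d : gT * bool) : gT :=
  if d.2 then d.1 else d.1^-1.

Definition walk_vertex (gT : finGroupType) (w0 : gT) (ds : seq (gT * bool)) (i : nat) : gT :=
  foldl (fun w d => w * signed_step d) w0 (take i ds).

Definition realizes (gT : finGroupType) (w0 : gT) (ds : seq (gT * bool)) (M : seq gT) : Prop :=
  perm_eq (map fst ds) M.

From mathcomp Require Import all_boot all_fingroup cyclic zify.
From Stdlib Require Import Classical_Prop.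
Set Implicit Arguments. Unset Strict Implicit. Unset Printing Implicit Defensive.
Local Open Scope group_scope.

(* Every prime divisor of |G| exceeds t^2 and |G| is odd, so x^k <> 1 for
   x <> 1 and 0 < k <= t^2, and square roots are unique.  Walks are built
   from three kinds of pieces.
   - Runs: a block of equal steps x^{+-1} is t-locally injective, and when
     consecutive runs have length >= t - 1 the sign of the next run can be
     chosen: if both failed, y^b = x^-a and y^b' = x^a' would give
     x^(ab' + a'b) = 1 with 0 < ab' + a'b < t^2.
   - Insertions: a step can be inserted at position g, for a suitable sign,
     unless w_i1 w_j1^-1 w_i2 w_j2^-1 = 1 for two spans i <= g <= j shorter
     than t; this never happens inside a long run.
   - Greedy steps: appending a step keeps both local injectivity and the
     insertion condition unless the new vertex lies in a set of O(t^3)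
     values read off the last 2t vertices, since each equation above has at
     most one solution in the new vertex.
   If M has many distinct values, the heavy ones form runs, the rest is
   appended greedily, and the few leftover values, of bounded multiplicity,
   are inserted into the greedy part.  Otherwise the most frequent value is
   so frequent that all light values can be inserted into its run. *)

Section GroupFacts.
Variable gT : finGroupType.
Implicit Types x y z v : gT.

Lemma expg_neq1_lt_pdiv x n : x != 1 -> (0 < n < pdiv #|[set: gT]|)%N -> x ^+ n != 1.
Proof.
move=> x1 /andP[n_gt0 n_lt]; apply: contraTneq n_lt => xn1; rewrite -leqNgt.
have x_gt1 : (1 < #[x])%N by rewrite ltn_neqAle eq_sym order_eq1 x1 order_gt0.
apply: leq_trans (pdiv_min_dvd x_gt1 _) (dvdn_leq n_gt0 _); last by rewrite order_dvdn xn1.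
by apply: order_dvdG; rewrite inE.
Qed.

Definition sqrtg x := x ^+ expg_invn [set: gT] 2.

Lemma sqrtgK x : odd #|[set: gT]| -> sqrtg (x ^+ 2) = x.
Proof. by rewrite -coprimen2 => odd_G; apply: expgK; rewrite ?inE. Qed.

Lemma solve_inv_last x y z v : x * z^-1 * y * v^-1 = 1 -> v = x * z^-1 * y.
Proof. by move/divg1_eq. Qed.

Lemma solve_inv_second x y z v : x * v^-1 * y * z^-1 = 1 -> v = y * z^-1 * x.
Proof. by move/divg1_eq <-; rewrite !invMg invgK !mulgA mulgV mul1g mulgKV. Qed.

Lemma solve_inv_twice x y v : odd #|[set: gT]| ->
  x * v^-1 * y * v^-1 = 1 -> v = y * (sqrtg (x^-1 * y))^-1.
Proof.
rewrite -!mulgA => odd_G /mulg1_eq e.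
have -> : x^-1 * y = (v^-1 * y) ^+ 2 by rewrite e expgS expg1 !mulgA.
by rewrite sqrtgK // invMg invgK mulKVg.
Qed.

Lemma exists_sign_powers_neq1 t u x : (t * t < pdiv #|[set: gT]|)%N -> u != 1 -> x != 1 ->
  exists s, forall a b, (0 < a)%N -> (0 < b)%N -> (a + b <= t)%N ->
    u ^+ a * signed_step (x, s) ^+ b != 1.
Proof.
move=> tt_p u1 x1.
case: (classic (forall a b, (0 < a)%N -> (0 < b)%N -> (a + b <= t)%N -> u ^+ a * x ^+ b != 1)).
  by exists true.
move=> not_plus; exists false => a2 b2 a2_gt0 b2_gt0 le_ab2; apply/eqP => /mulg1_eq e2.
apply: not_plus => a1 b1 a1_gt0 b1_gt0 le_ab1; apply/eqP => /mulg1_eq e1.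
have e2' : x ^+ b2 = u ^+ a2 by apply: invg_inj; rewrite e2 /= expVgn.
have : u ^+ (a1 * b2 + a2 * b1) = 1.
  rewrite expgD [u ^+ (a2 * b1)]expgM -e2' -expgM (mulnC b2) [x ^+ (b1 * b2)]expgM.
  by rewrite -e1 expVgn -expgM mulgV.
by apply/eqP; apply: expg_neq1_lt_pdiv => //; nia.
Qed.

Lemma signed_step_eq1 x s : (signed_step (x, s) == 1) = (x == 1).
Proof. by case: s; rewrite /= ?invg_eq1. Qed.

Lemma odd_pdiv_gt2 n : (2 < pdiv n)%N -> odd n.
Proof. by rewrite ltnNge; apply: contraNT; rewrite -dvdn2; apply: pdiv_min_dvd. Qed.

End GroupFacts.

Section Multisets.
Variable T : eqType.
Implicit Types (s R H : seq T) (x y : T).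

Lemma size_undup_rem R y : y \in R -> (size (undup R) <= (size (undup (rem y R))).+1)%N.
Proof.
move=> yR; apply: (@uniq_leq_size _ _ (y :: undup (rem y R))); first exact: undup_uniq.
by move=> x; rewrite mem_undup (perm_mem (perm_to_rem yR)) !inE mem_undup.
Qed.

Lemma exists_map_notin (U : eqType) (f : T -> U) R (B : seq U) : injective f ->
  (size B < size (undup R))%N -> exists2 y, y \in R & f y \notin B.
Proof.
move=> inj_f; rewrite ltnNge => many.
case: (boolP (all (mem B) (map f (undup R)))) => [/allP sub | /allPn[_ /mapP[y yR ->] fyB]].
  by rewrite -(size_map f) uniq_leq_size ?map_inj_uniq ?undup_uniq in many.
by exists y; rewrite // -mem_undup.
Qed.

Lemma size_le_undup_mul s m : (forall x, count_mem x s <= m)%N ->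
  (size s <= size (undup s) * m)%N.
Proof.
move=> le_m; rewrite -(perm_size (perm_count_undup s)) size_flatten /shape -map_comp.
by elim: (undup s) => [|x r IH] //=; rewrite mulSn leq_add // size_nseq.
Qed.

Lemma perm_heavy_light s h : (0 < h)%N -> exists H L,
  [/\ uniq H, forall x, (x \in H) = (h <= count_mem x s)%N, (forall x, count_mem x L < h)%N,
      s =i H ++ L & perm_eq s (flatten [seq nseq (count_mem x s) x | x <- H] ++ L)].
Proof.
move=> h_gt0; pose heavy x := (h <= count_mem x s)%N.
exists [seq x <- undup s | heavy x], [seq x <- s | ~~ heavy x]; split.
- exact/filter_uniq/undup_uniq.
- move=> x; rewrite mem_filter mem_undup andb_idr // => hx.
  by rewrite -has_pred1 has_count; apply: leq_trans hx.
- move=> x; rewrite count_filter; case: (boolP (heavy x)) => hx.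
    by rewrite (@eq_count _ _ pred0) ?count_pred0 // => y /=; case: eqP => // ->; rewrite hx.
  apply: (@leq_ltn_trans (count_mem x s)); last by rewrite ltnNge.
  by apply: sub_count => y /andP[].
- by move=> x; rewrite mem_cat !mem_filter mem_undup -andb_orl orbN.
rewrite -{1}(perm_filterC heavy s) perm_cat2r perm_sym filter_undup.
suff -> : [seq nseq (count_mem x s) x | x <- undup (filter heavy s)] =
          [seq nseq (count_mem x (filter heavy s)) x | x <- undup (filter heavy s)].
  exact: perm_count_undup.
apply/eq_in_map => x; rewrite mem_undup mem_filter => /andP[hx _].
by rewrite count_filter; congr nseq; apply: eq_count => y /=; case: eqP => // ->; rewrite hx.
Qed.

Lemma perm_flatten_nseqS H (f : T -> nat) :
  perm_eq (flatten [seq nseq (f x).+1 x | x <- H]) (flatten [seq nseq (f x) x | x <- H] ++ H).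
Proof.
elim: H => //= x H /seq.permP IH; apply/seq.permP => p.
by move: (IH p); rewrite /= !count_cat /=; lia.
Qed.

End Multisets.

(** * Walks and insertion *)

Section Walks.
Variable gT : finGroupType.
Implicit Types (ds : seq (gT * bool)) (d : gT * bool) (u x y : gT).

Definition vertex ds i := \prod_(d <- take i ds) signed_step d.

Lemma walk_vertexE w0 ds i : walk_vertex w0 ds i = w0 * vertex ds i.
Proof.
rewrite /walk_vertex /vertex; elim: (take i ds) w0 => [|d s IH] w0 /=.
  by rewrite big_nil mulg1.
by rewrite IH big_cons mulgA.
Qed.

Lemma vertex0 ds : vertex ds 0 = 1.
Proof. by rewrite /vertex take0 big_nil. Qed.

Lemma vertex_cons d ds k : vertex (d :: ds) k.+1 = signed_step d * vertex ds k.
Proof. by rewrite /vertex /= big_cons. Qed.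

Lemma vertexD ds i k : vertex ds (i + k) = vertex ds i * vertex (drop i ds) k.
Proof. by rewrite /vertex takeD big_cat. Qed.

Lemma vertex_cat_le s1 s2 i : (i <= size s1)%N -> vertex (s1 ++ s2) i = vertex s1 i.
Proof. by move=> le_i; rewrite /vertex takel_cat. Qed.

Lemma vertex_cat s1 s2 k :
  vertex (s1 ++ s2) (size s1 + k) = vertex s1 (size s1) * vertex s2 k.
Proof. by rewrite vertexD drop_size_cat // vertex_cat_le. Qed.

Lemma vertex_const ds u k : all (fun d => signed_step d == u) ds -> (k <= size ds)%N ->
  vertex ds k = u ^+ k.
Proof.
elim: ds k => [|d ds IH] [|k] all_u le_k; rewrite ?vertex0 //.
move: all_u => /= /andP[/eqP step_u all_u].
by rewrite vertex_cons IH // step_u expgS.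
Qed.

Lemma vertex_nseq c d k : (k <= c)%N -> vertex (nseq c d) k = signed_step d ^+ k.
Proof.
by move=> le_k; apply: vertex_const; rewrite ?size_nseq // all_nseq eqxx orbT.
Qed.

Definition insert_at ds g d := take g ds ++ d :: drop g ds.

Lemma size_insert_at ds g d : (g <= size ds)%N -> size (insert_at ds g d) = (size ds).+1.
Proof. by move=> le_g; rewrite size_cat /= size_takel // size_drop; lia. Qed.

Lemma perm_insert_at ds g d : perm_eq (map fst (insert_at ds g d)) (d.1 :: map fst ds).
Proof.
rewrite -{2}(cat_take_drop g ds) !map_cat /= -cat1s -[d.1 :: _]cat1s.
by rewrite perm_catCA.
Qed.

Lemma vertex_insert_le ds g d i : (g <= size ds)%N -> (i <= g)%N ->
  vertex (insert_at ds g d) i = vertex ds i.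
Proof. by move=> le_g le_i; rewrite vertex_cat_le ?size_takel // /vertex take_takel. Qed.

Lemma vertex_insert_gt ds g d j : (g <= size ds)%N -> (g <= j)%N ->
  vertex (insert_at ds g d) j.+1 = signed_step d ^ (vertex ds g)^-1 * vertex ds j.
Proof.
move=> le_g le_j; have size_g : size (take g ds) = g by rewrite size_takel.
have -> : vertex ds j = vertex ds g * vertex (drop g ds) (j - g) by rewrite -vertexD subnKC.
have -> : j.+1 = (size (take g ds) + (j - g).+1)%N by rewrite size_g; lia.
rewrite vertex_cat vertex_cons size_g /vertex take_takel // conjgE invgK.
by rewrite !mulgA mulgKV.
Qed.

Variable t : nat.

Definition locally_injective ds :=
  forall i j, (i < j <= size ds)%N -> (j - i <= t)%N -> vertex ds i != vertex ds j.

Lemma locally_injective_insert ds g d : locally_injective ds -> (g <= size ds)%N ->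
  (forall i j, (i <= g <= j)%N -> (j <= size ds)%N -> (j - i < t)%N ->
     vertex ds i != signed_step d ^ (vertex ds g)^-1 * vertex ds j) ->
  locally_injective (insert_at ds g d).
Proof.
move=> inj_ds le_g cross i j; rewrite size_insert_at // => /andP[lt_ij le_j] le_ji.
have [le_jg | lt_gj] := leqP j g.
  by rewrite !vertex_insert_le //; [apply: inj_ds; lia | lia].
case: j lt_ij le_j le_ji lt_gj => // j lt_ij le_j le_ji lt_gj.
rewrite vertex_insert_gt //.
have [le_ig | lt_gi] := leqP i g.
  by rewrite vertex_insert_le //; apply: cross; lia.
case: i lt_ij le_ji lt_gi => // i lt_ij le_ji lt_gi.
by rewrite vertex_insert_gt // (inj_eq (mulgI _)); apply: inj_ds; lia.
Qed.

Definition spans g i j := [&& i <= g <= j, i < j & j - i < t]%N.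

Definition insertable ds g := forall i1 j1 i2 j2, spans g i1 j1 -> spans g i2 j2 ->
  (j1 <= size ds)%N -> (j2 <= size ds)%N ->
  vertex ds i1 * (vertex ds j1)^-1 * vertex ds i2 * (vertex ds j2)^-1 != 1.

Lemma insert_at_sign ds g y : y != 1 -> locally_injective ds -> insertable ds g ->
  (g <= size ds)%N -> exists s, locally_injective (insert_at ds g (y, s)).
Proof.
move=> y1 inj_ds ins_g le_g.
pose c s := signed_step (y, s) ^ (vertex ds g)^-1.
have c_false : c false = (c true)^-1 by rewrite /c conjVg.
have c1 s : c s != 1 by rewrite conjg_eq1; case: s => //=; rewrite eq_invg1.
have cross_spans s i j : vertex ds i = c s * vertex ds j -> (i <= g <= j)%N -> (j - i < t)%N ->
    spans g i j.
  move=> e le_igj lt_ji; suff : i != j by rewrite /spans; lia.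
  apply: contra (c1 s) => /eqP ij; move: e.
  by rewrite ij -{1}[vertex ds j]mul1g => /mulIg <-.
(* If both signs fail, the collisions w_i1 = c w_j1 and w_i2 = c^-1 w_j2
   multiply to a relation excluded by [insertable ds g]. *)
case: (classic (forall i j, (i <= g <= j)%N -> (j <= size ds)%N -> (j - i < t)%N ->
    vertex ds i != c true * vertex ds j)) => [cross_true | not_true].
  by exists true; apply: locally_injective_insert.
exists false; apply: locally_injective_insert => // i2 j2 le_igj2 le_j2 lt2; apply/eqP => e2.
apply: not_true => i1 j1 le_igj1 le_j1 lt1; apply/eqP => e1.
have := ins_g i1 j1 i2 j2 (cross_spans _ _ _ e1 le_igj1 lt1)
  (cross_spans _ _ _ e2 le_igj2 lt2) le_j1 le_j2.
by rewrite e1 e2 -/(c false) c_false !mulgA !mulgK mulgV eqxx.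
Qed.

Lemma insertable_insert_at ds g g' d : (g + t.-1 <= g' <= size ds)%N -> insertable ds g ->
  insertable (insert_at ds g' d) g.
Proof.
rewrite /insertable /spans => le_g' ins_g i1 j1 i2 j2 sp1 sp2 _ _.
have old k : (k <= g + t.-1)%N -> vertex (insert_at ds g' d) k = vertex ds k.
  by move=> le_k; apply: vertex_insert_le; lia.
by rewrite !old; try lia; apply: ins_g => //; lia.
Qed.

Lemma absorb Z ds base : all (fun x => x != 1) Z -> locally_injective ds ->
  (forall i, (i < size Z)%N -> insertable ds (base + i * t)) ->
  (base + size Z * t <= size ds)%N ->
  exists2 ds', locally_injective ds' & perm_eq (map fst ds') (Z ++ map fst ds).
Proof.
elim: Z ds => [|y Z IH] ds /=; first by exists ds.
move=> /andP[y1 Z1] inj_ds ins_ds size_ds; set g := (base + size Z * t)%N.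
have le_g : (g <= size ds)%N by rewrite /g; nia.
have [s inj_s] := insert_at_sign y1 inj_ds (ins_ds _ (ltnSn _)) le_g.
have ins_s i : (i < size Z)%N -> insertable (insert_at ds g (y, s)) (base + i * t).
  by move=> lt_i; apply: insertable_insert_at; [rewrite /g; nia | apply: ins_ds; lia].
have size_s : (base + size Z * t <= size (insert_at ds g (y, s)))%N.
  by rewrite size_insert_at //; nia.
have [ds' inj' perm'] := IH _ Z1 inj_s ins_s size_s.
exists ds' => //; apply: perm_trans perm' _.
have := perm_insert_at ds g (y, s); rewrite -(perm_cat2l Z) => /perm_trans -> //.
by rewrite -cat1s perm_catCA.
Qed.

(** * Runs *)

(* Runs of length at least [t - 1] ensure that a window of [t] steps meets
   at most two of them. *)
Definition ends_with_run ds u :=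
  all (fun d => signed_step d == u) (drop (size ds - t.-1) ds).

Lemma vertex_end_run ds u i : ends_with_run ds u -> (size ds - t.-1 <= i <= size ds)%N ->
  vertex ds (size ds) = vertex ds i * u ^+ (size ds - i).
Proof.
move=> run_u /andP[le_i le_n]; rewrite -{1}(subnKC le_n) vertexD; congr (_ * _).
apply: vertex_const; last by rewrite size_drop.
move/allP: run_u => run_u; rewrite -(subnK le_i) -drop_drop.
by apply/allP => d /mem_drop /run_u.
Qed.

Lemma ends_with_run_cat_nseq ds c x s : (t.-1 <= c)%N ->
  ends_with_run (ds ++ nseq c (x, s)) (signed_step (x, s)).
Proof.
move=> le_c; rewrite /ends_with_run size_cat size_nseq drop_cat.
by case: ltnP => [|_]; [lia | rewrite drop_nseq all_nseq eqxx orbT].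
Qed.

Hypothesis tt_lt_pdiv : (t * t < pdiv #|[set: gT]|)%N.

Lemma locally_injective_append_run ds u x c : u != 1 -> x != 1 ->
  locally_injective ds -> ends_with_run ds u ->
  exists s, locally_injective (ds ++ nseq c (x, s)).
Proof.
move=> u1 x1 inj_ds run_u; have [s sgn] := exists_sign_powers_neq1 tt_lt_pdiv u1 x1.
exists s => i j; rewrite size_cat size_nseq => /andP[lt_ij le_j] le_ji.
have in_run k : (size ds <= k <= size ds + c)%N ->
    vertex (ds ++ nseq c (x, s)) k = vertex ds (size ds) * signed_step (x, s) ^+ (k - size ds).
  by move=> /andP[le_k le_kc]; rewrite -{1}(subnKC le_k) vertex_cat vertex_nseq //; lia.
have [le_jn | lt_nj] := leqP j (size ds).
  by rewrite !vertex_cat_le //; [apply: inj_ds; lia | lia].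
rewrite (in_run j); last lia.
have [le_ni | lt_in] := leqP (size ds) i.
  rewrite in_run; last lia.
  rewrite (_ : j - size ds = i - size ds + (j - i))%N; last lia.
  rewrite expgD mulgA -{1}[_ * _ ^+ (i - _)]mulg1 (inj_eq (mulgI _)) eq_sym.
  by apply: expg_neq1_lt_pdiv; rewrite ?signed_step_eq1 //; nia.
rewrite vertex_cat_le; last lia.
rewrite (vertex_end_run run_u (i := i)); last lia.
rewrite -mulgA -{1}[vertex ds i]mulg1 (inj_eq (mulgI _)) eq_sym.
by apply: sgn; lia.
Qed.

Lemma append_runs H f ds u : u != 1 -> locally_injective ds -> ends_with_run ds u ->
  all (fun x => (x != 1) && (t.-1 <= f x)%N) H ->
  exists2 e, locally_injective (ds ++ e) & map fst e = flatten [seq nseq (f x) x | x <- H].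
Proof.
elim: H ds u => [|x H IH] ds u u1 inj_ds run_u /=; first by exists [::]; rewrite ?cats0.
case/andP=> /andP[x1 le_fx] all_H.
have [s inj_s] := locally_injective_append_run (f x) u1 x1 inj_ds run_u.
have [|e inj_e map_e] := IH _ _ _ inj_s (ends_with_run_cat_nseq _ _ _ le_fx) all_H.
  by rewrite signed_step_eq1.
by exists (nseq (f x) (x, s) ++ e); rewrite ?catA // map_cat map_nseq map_e.
Qed.

Lemma insertable_in_run ds x s c g : x != 1 -> (g + t.-1 <= c)%N ->
  insertable (nseq c (x, s) ++ ds) g.
Proof.
rewrite /insertable /spans => x1 le_gc i1 j1 i2 j2 sp1 sp2 _ _.
set y := signed_step (x, s).
have in_run k : (k <= c)%N -> vertex (nseq c (x, s) ++ ds) k = y ^+ k.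
  by move=> le_k; rewrite vertex_cat_le ?size_nseq // vertex_nseq.
have div_pow i j : (i <= j)%N -> y ^+ i * (y ^+ j)^-1 = (y ^+ (j - i))^-1.
  by move=> le_ij; rewrite -{1}(subnK le_ij) expgD invMg mulKVg.
rewrite !in_run; try lia.
rewrite -mulgA !div_pow; try lia.
rewrite -invMg -expgD invg_eq1; apply: expg_neq1_lt_pdiv; rewrite ?signed_step_eq1 //; nia.
Qed.

(** * Greedy extension *)

Definition window ds := [seq vertex ds k | k <- iota ((size ds).+1 - 2 * t) (2 * t)].

Lemma mem_window ds k : (k <= size ds)%N -> ((size ds).+1 - k <= 2 * t)%N ->
  vertex ds k \in window ds.
Proof. by move=> le_k le_kt; apply: map_f; rewrite mem_iota; lia. Qed.

(* A value [v] of the next vertex is forbidden when it repeats one of the last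
   [2 t] vertices or is the unique solution of one of the equations
   [a v^-1 b c^-1 = 1], [a c^-1 b v^-1 = 1], [a v^-1 b v^-1 = 1] over them. *)
Definition forbidden ds :=
  let W := window ds in
  W ++ [seq a * c | a <- [seq a * b^-1 | a <- W, b <- W], c <- W]
    ++ [seq b * (sqrtg (a^-1 * b))^-1 | a <- W, b <- W].

Definition forbidden_size := (2 * t + 2 * t * (2 * t) * (2 * t) + 2 * t * (2 * t))%N.

Lemma size_forbidden ds : size (forbidden ds) = forbidden_size.
Proof. by rewrite !size_cat !size_allpairs size_map size_iota addnA. Qed.

Lemma mem_forbidden_window ds a : a \in window ds -> a \in forbidden ds.
Proof. by rewrite /forbidden mem_cat => ->. Qed.

Lemma mem_forbidden_div ds a b c : a \in window ds -> b \in window ds -> c \in window ds ->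
  a * b^-1 * c \in forbidden ds.
Proof.
by move=> Wa Wb Wc; rewrite /forbidden !mem_cat (allpairs_f _ (allpairs_f _ Wa Wb) Wc) orbT.
Qed.

Lemma mem_forbidden_sqrt ds a b : a \in window ds -> b \in window ds ->
  b * (sqrtg (a^-1 * b))^-1 \in forbidden ds.
Proof. by move=> Wa Wb; rewrite /forbidden !mem_cat (allpairs_f _ Wa Wb) !orbT. Qed.

Lemma vertex_rcons_le ds d k : (k <= size ds)%N -> vertex (rcons ds d) k = vertex ds k.
Proof. by rewrite -cats1; apply: vertex_cat_le. Qed.

Lemma vertex_rcons_last ds d :
  vertex (rcons ds d) (size ds).+1 = vertex ds (size ds) * signed_step d.
Proof. by rewrite -cats1 -addn1 vertex_cat vertex_cons vertex0 mulg1. Qed.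

Lemma locally_injective_rcons ds d : locally_injective ds ->
  vertex (rcons ds d) (size ds).+1 \notin window ds -> locally_injective (rcons ds d).
Proof.
move=> inj_ds fresh i j; rewrite size_rcons => /andP[lt_ij le_j] le_ji.
rewrite vertex_rcons_le; last lia.
have [le_jn | lt_nj] := leqP j (size ds).
  by rewrite vertex_rcons_le //; apply: inj_ds; lia.
have -> : j = (size ds).+1 by lia.
by apply: contraNneq fresh => <-; apply: mem_window; lia.
Qed.

Definition insertable_after ds g0 := forall g, (g0 < g)%N -> insertable ds g.

Lemma insertable_after_size ds : insertable_after ds (size ds).
Proof. by rewrite /insertable_after /insertable /spans => g lt_g *; lia. Qed.

Hypothesis odd_G : odd #|[set: gT]|.

Lemma insertable_after_rcons ds d g0 : insertable_after ds g0 ->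
  vertex (rcons ds d) (size ds).+1 \notin forbidden ds -> insertable_after (rcons ds d) g0.
Proof.
rewrite /insertable_after /insertable /spans => ins fresh g lt_g i1 j1 i2 j2 sp1 sp2.
rewrite size_rcons => le_j1 le_j2.
have in_window k : (k <= size ds)%N -> ((size ds).+1 - k <= 2 * t)%N ->
    vertex (rcons ds d) k \in window ds.
  by move=> le_k le_kt; rewrite vertex_rcons_le //; apply: mem_window.
have [le_j1n | lt_nj1] := leqP j1 (size ds); have [le_j2n | lt_nj2] := leqP j2 (size ds).
- by rewrite !vertex_rcons_le; try lia; apply: (ins g) => //; lia.
- have -> : j2 = (size ds).+1 by lia.
  apply: contraNneq fresh => /solve_inv_last ->.
  by apply: mem_forbidden_div; apply: in_window; lia.
- have -> : j1 = (size ds).+1 by lia.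
  apply: contraNneq fresh => /solve_inv_second ->.
  by apply: mem_forbidden_div; apply: in_window; lia.
- have -> : j1 = (size ds).+1 by lia.
  have -> : j2 = (size ds).+1 by lia.
  apply: contraNneq fresh => /(solve_inv_twice odd_G) ->.
  by apply: mem_forbidden_sqrt; apply: in_window; lia.
Qed.

Lemma greedy_extension R ds g0 : all (fun x => x != 1) R -> locally_injective ds ->
  insertable_after ds g0 -> exists (e : seq (gT * bool)) (R' : seq gT),
  [/\ perm_eq (map fst e ++ R') R, locally_injective (ds ++ e), insertable_after (ds ++ e) g0,
      (size (undup R') <= forbidden_size)%N & (size (undup R) <= size e + forbidden_size)%N].
Proof.
elim: {R}(size R) {-2}R (leqnn (size R)) ds => [|n IH] R size_R ds R1 inj_ds ins_ds.
  by move: size_R; rewrite leqn0 => /nilP ->; exists [::], [::]; rewrite !cats0.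
have [few | many] := leqP (size (undup R)) forbidden_size.
  by exists [::], R; rewrite !cats0.
rewrite -(@size_forbidden ds) in many.
have [y yR fresh] := exists_map_notin (mulgI (vertex ds (size ds))) many.
rewrite -[_ * y]/(vertex ds (size ds) * signed_step (y, true)) -vertex_rcons_last in fresh.
have inj_y := locally_injective_rcons inj_ds (contra (@mem_forbidden_window _ _) fresh).
have ins_y := insertable_after_rcons ins_ds fresh.
have size_rem : (size (rem y R) <= n)%N by move: size_R; rewrite (perm_size (perm_to_rem yR)).
have R1_rem : all (fun x => x != 1) (rem y R).
  by apply/allP => x /mem_rem; move/allP: R1; apply.
have [e [R' [perm_e inj_e ins_e few_R' long_e]]] := IH _ size_rem _ R1_rem inj_y ins_y.
exists ((y, true) :: e), R'; rewrite -cat_rcons; split => //.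
  by rewrite perm_sym (perm_trans (perm_to_rem yR)) //= perm_cons perm_sym.
by apply: leq_trans (size_undup_rem yR) _; rewrite /= addSn ltnS.
Qed.

(** * Realizations *)

Lemma locally_injective_nil : locally_injective [::].
Proof. by move=> i j /=; lia. Qed.

Lemma ends_with_run_nil u : ends_with_run [::] u.
Proof. by []. Qed.

Hypothesis t_gt0 : (0 < t)%N.

(* The greedy phase leaves at most [forbidden_size] values of multiplicity at
   most [t + 1], to be inserted [t] apart into the greedy part. *)
Definition distinct_threshold := (forbidden_size * t.+1 * t + forbidden_size).+1.
Definition length_threshold := (distinct_threshold * distinct_threshold * (t * t.+1)).+1.

Lemma extend_by_many_distinct ds P : locally_injective ds -> all (fun x => x != 1) P ->
  (forall x, count_mem x P <= t.+1)%N -> (distinct_threshold <= size (undup P))%N ->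
  exists2 ds', locally_injective ds' & perm_eq (map fst ds') (map fst ds ++ P).
Proof.
move=> inj_ds P1 count_P many.
have [e [Z [perm_Z inj_e ins_e few_Z long_e]]] :=
  greedy_extension P1 inj_ds (@insertable_after_size ds).
have Z1 : all (fun x => x != 1) Z.
  by apply/allP => x xZ; move/allP: P1; apply; rewrite -(perm_mem perm_Z) mem_cat xZ orbT.
have count_Z x : (count_mem x Z <= t.+1)%N.
  by apply: leq_trans (count_P x); rewrite -(seq.permP perm_Z) count_cat leq_addl.
have size_Z : (size Z * t <= forbidden_size * t.+1 * t)%N.
  by rewrite leq_mul2r (leq_trans (size_le_undup_mul count_Z)) ?orbT // leq_mul2r few_Z orbT.
have ins_Z i : (i < size Z)%N -> insertable (ds ++ e) ((size ds).+1 + i * t).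
  by move=> _; apply: ins_e; lia.
have room : ((size ds).+1 + size Z * t <= size (ds ++ e))%N.
  by rewrite size_cat; move: many long_e size_Z; rewrite /distinct_threshold; lia.
have [ds' inj' perm'] := absorb Z1 inj_e ins_Z room.
exists ds' => //; apply: perm_trans perm' _.
by rewrite map_cat perm_catCA perm_cat2l perm_catC.
Qed.

Lemma realization_many_distinct M : all (fun x => x != 1) M ->
  (distinct_threshold <= size (undup M))%N ->
  exists2 ds, locally_injective ds & perm_eq (map fst ds) M.
Proof.
move=> M1 many.
have [u u1] : exists u : gT, u != 1.
  by case: M M1 many => [|u M'] //= /andP[u1 _] _; exists u.
have [H [L [uniq_H heavy_H light_L mem_M perm_M]]] := perm_heavy_light M (ltn0Sn t).
have P1 : all (fun x => x != 1) (H ++ L) by apply/allP => x; rewrite -mem_M; apply: (allP M1).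
have H_runs : all (fun x => (x != 1) && (t.-1 <= (count_mem x M).-1)%N) H.
  apply/allP => x xH; move/allP: P1 => -> /=; last by rewrite mem_cat xH.
  by move: xH; rewrite heavy_H; set c := count_mem x M; lia.
have [dsc inj_c map_c] := append_runs u1 locally_injective_nil (ends_with_run_nil u) H_runs.
have count_P x : (count_mem x (H ++ L) <= t.+1)%N.
  rewrite count_cat count_uniq_mem // -add1n.
  by apply: leq_add; [apply: leq_b1 | apply: light_L].
have distinct_P : size (undup (H ++ L)) = size (undup M).
  by apply/perm_size/perm_undup => x; rewrite mem_M.
rewrite -distinct_P in many.
have [ds' inj' perm'] := extend_by_many_distinct inj_c P1 count_P many.
exists ds' => //; apply: perm_trans perm' _; rewrite map_c perm_sym catA.
apply: perm_trans perm_M _; rewrite perm_cat2r.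
have -> : [seq nseq (count_mem x M) x | x <- H] = [seq nseq (count_mem x M).-1.+1 x | x <- H].
  by apply/eq_in_map => x; rewrite heavy_H => heavy_x; rewrite prednK // (leq_ltn_trans _ heavy_x).
exact: perm_flatten_nseqS.
Qed.

Lemma absorb_into_run x s c e Z : x != 1 -> locally_injective (nseq c (x, s) ++ e) ->
  all (fun y => y != 1) Z -> (size Z * t <= c)%N ->
  exists2 ds', locally_injective ds' & perm_eq (map fst ds') (Z ++ map fst (nseq c (x, s) ++ e)).
Proof.
move=> x1 inj_e Z1 size_Z; apply: (absorb (base := 0) Z1 inj_e).
  move=> i lt_i; apply: insertable_in_run => //; move: size_Z (leq_mul lt_i (leqnn t)).
  by rewrite mulSn; set l := (size Z * t)%N; lia.
by rewrite size_cat size_nseq; lia.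
Qed.

Lemma few_distinct_frequent (k c n : nat) : (k < distinct_threshold)%N ->
  (length_threshold <= n)%N -> (n <= k * c)%N -> (0 < k)%N /\ (k * (t * t.+1) <= c)%N.
Proof.
move=> few long le_n; split.
  by have := leq_trans (leq_trans (ltn0Sn _) long) le_n; rewrite muln_gt0 => /andP[].
rewrite leqNgt; apply/negP => lt_c.
have le_dT := leq_mul (ltnW few) (leqnn (t * t.+1)).
have := leq_mul (ltnW few) (leq_trans (ltnW lt_c) le_dT); rewrite mulnA => le_DDT.
by have := leq_trans long (leq_trans le_n le_DDT); rewrite ltnn.
Qed.

Lemma realization_few_distinct M : all (fun x => x != 1) M ->
  (size (undup M) < distinct_threshold)%N -> (length_threshold <= size M)%N ->
  exists2 ds, locally_injective ds & perm_eq (map fst ds) M.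
Proof.
move=> M1 few long.
have [z _ z_max] := @arg_maxnP gT 1 predT (fun x => count_mem x M) isT.
have [d_gt0 long_z] :=
  few_distinct_frequent few long (size_le_undup_mul (fun x => z_max x isT)).
have [H [L [uniq_H heavy_H light_L mem_M perm_M]]] := perm_heavy_light M (ltn0Sn t).
have zH : z \in H.
  rewrite heavy_H; apply: leq_trans long_z; apply: leq_trans (leq_pmull _ d_gt0).
  exact: leq_pmull.
have z1 : z != 1 by apply: (allP M1); rewrite mem_M mem_cat zH.
have [s inj_z] := locally_injective_append_run (count_mem z M) z1 z1
  locally_injective_nil (ends_with_run_nil z).
rewrite cat0s in inj_z.
have run_z : ends_with_run (nseq (count_mem z M) (z, s)) (signed_step (z, s)).
  apply: (ends_with_run_cat_nseq [::]).
  by move: zH; rewrite heavy_H => /ltnW; apply: leq_trans (leq_pred t).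
have rest_runs : all (fun x => (x != 1) && (t.-1 <= count_mem x M)%N) (rem z H).
  apply/allP => x /mem_rem xH; rewrite (allP M1) ?mem_M ?mem_cat ?xH //=.
  by move: xH; rewrite heavy_H => /ltnW; apply: leq_trans (leq_pred t).
have sz1 : signed_step (z, s) != 1 by rewrite signed_step_eq1.
have [e inj_e map_e] := append_runs sz1 inj_z run_z rest_runs.
have L1 : all (fun x => x != 1) L.
  by apply/allP => x xL; rewrite (allP M1) // mem_M mem_cat xL orbT.
have size_L : (size L * t <= count_mem z M)%N.
  have le_LM : (size (undup L) <= size (undup M))%N.
    by apply: uniq_leq_size (undup_uniq L) _ => x; rewrite !mem_undup mem_M mem_cat orbC => ->.
  apply: leq_trans long_z; rewrite mulnA leq_mul //.
  by apply: leq_trans (size_le_undup_mul (m := t) light_L) _; rewrite leq_mul2r le_LM orbT.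
have [ds' inj' perm'] := absorb_into_run z1 inj_e L1 size_L.
exists ds' => //; apply: perm_trans perm' _.
have perm_H := perm_flatten (perm_map (fun x => nseq (count_mem x M) x) (perm_to_rem zH)).
rewrite map_cat map_nseq map_e perm_sym (perm_trans perm_M) //.
by rewrite perm_catC perm_cat2l.
Qed.

Lemma exists_locally_injective_realization M : all (fun x => x != 1) M ->
  (length_threshold <= size M)%N ->
  exists2 ds, locally_injective ds & perm_eq (map fst ds) M.
Proof.
move=> M1 long; have [many | few] := leqP distinct_threshold (size (undup M)).
  exact: realization_many_distinct.
exact: realization_few_distinct.
Qed.

End Walks.

Theorem theorem3p3 :
  forall t : nat, (0 < t)%N ->
  exists L : nat,
    forall (gT : finGroupType) (M : seq gT),
      (t * (2 * t + 1) < pdiv #|[set: gT]|)%N ->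
      all (fun x => x != 1) M ->
      (L <= size M)%N ->
      exists (w0 : gT) (ds : seq (gT * bool)),
        realizes w0 ds M /\
        forall i j : nat, (i < j)%N -> (j <= size M)%N -> (j - i <= t)%N ->
          walk_vertex w0 ds i != walk_vertex w0 ds j.
Proof.
move=> t t_gt0; exists (length_threshold t) => gT M p_big M1 long.
have tt_p : (t * t < pdiv #|[set: gT]|)%N by apply: leq_ltn_trans p_big; nia.
have odd_G : odd #|[set: gT]| by apply: odd_pdiv_gt2; nia.
have [ds inj_ds perm_ds] := exists_locally_injective_realization tt_p odd_G t_gt0 M1 long.
exists 1, ds; split => // i j lt_ij le_j le_ji; rewrite !walk_vertexE !mul1g.
by apply: inj_ds => //; rewrite lt_ij -(size_map fst) (perm_size perm_ds).
Qed.
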